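(* Let $0<p_i<1$ and $r_i\ge 0$ for $i=1,\dots,n$, indexed so that $r_1/p_1\ge r_2/p_2\ge\dots\ge r_n/p_n$. For $S\subseteq\{1,\dots,n\}$ let $f(S)=\sum_{i\in S} r_i+\prod_{i\in S}(1-p_i)$. Then the maximum of $f(S)$ over all subsets $S$ is attained at $S=\{1,2,\dots,k\}$ for some $0\le k\le n$. *)

From HB Require Import structures.
From mathcomp Require Import all_boot all_order all_algebra.
Set Implicit Arguments. Unset Strict Implicit. Unset Printing Implicit Defensive.
Import Order.TTheory GRing.Theory Num.Theory.
Local Open Scope ring_scope.

Definition fval (R : realFieldType) (n : nat) (p r : 'I_n -> R) (S : {set 'I_n}) : R :=
  \sum_(i in S) r i + \prod_(i in S) (1 - p i).

(* the initial segment {1,...,k} (0-based: {0,...,k-1}) *)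
Definition prefix_set (n k : nat) : {set 'I_n} := [set i : 'I_n | (i < k)%N].

From HB Require Import structures.
From mathcomp Require Import all_boot all_order all_algebra.
From mathcomp Require Import lra.
Import Order.TTheory GRing.Theory Num.Theory.
Local Open Scope ring_scope.

(* Proof idea: an exchange argument.  Write P_A = prod_(k in A) (1 - p_k).
   If j is in S and dropping j does not increase f, then r_j >= p_j P_(S\j),
   i.e. P_(S\j) <= r_j/p_j <= r_i/p_i for every earlier index i <= j.  Hence
   for i not in S, adding i changes f by r_i - p_i (1 - p_j) P_(S\j) >= 0
   (lemma [add_earlier_index]).  Now take, among all maximisers of f, one of
   largest cardinality.  If it missed some index i lying before one of its
   elements j, adding i would give a larger maximiser; so it is downward
   closed, and downward closed subsets of 'I_n are initial segments
   (lemma [downward_closed_prefix]). *)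

(* A downward closed set of indices is the initial segment of length
   1 + (its largest element), or empty. *)
Lemma downward_closed_prefix (n : nat) (S : {set 'I_n}) :
  (forall i j : 'I_n, (i <= j)%N -> j \in S -> i \in S) ->
  exists2 k : nat, (k <= n)%N & S = prefix_set n k.
Proof.
move=> downS; exists (\max_(j in S) j.+1)%N.
  by apply/bigmax_leqP => j _; exact: ltn_ord.
apply/setP => i; rewrite inE; apply/idP/idP => [iS | ].
  exact: leq_bigmax_cond.
apply: contraLR => iNS; rewrite -leqNgt; apply/bigmax_leqP => j jS.
by rewrite ltnNge; apply: contra iNS => ji; exact: downS ji jS.
Qed.

Section Exchange.
Variables (R : realFieldType) (n : nat) (p r : 'I_n -> R).
Hypothesis hp : forall i, 0 < p i /\ p i < 1.
Hypothesis hord : forall i j : 'I_n, (i <= j)%N -> r j / p j <= r i / p i.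

Lemma prod_compl_ge0 (A : {set 'I_n}) : 0 <= \prod_(k in A) (1 - p k).
Proof. by apply: prodr_ge0 => k _; rewrite subr_ge0 ltW //; case: (hp k). Qed.

Lemma add_earlier_index (S : {set 'I_n}) (i j : 'I_n) :
  i \notin S -> j \in S -> (i <= j)%N ->
  fval p r (S :\ j) <= fval p r S -> fval p r S <= fval p r (i |: S).
Proof.
move=> iNS jS le_ij dropj.
rewrite /fval in dropj *; rewrite !big_setU1 //=.
rewrite !(big_setD1 j jS) /= in dropj *.
set A := \sum_(k in S :\ j) r k in dropj *.
set P := \prod_(k in S :\ j) (1 - p k) in dropj *.
have P_ge0 : 0 <= P := prod_compl_ge0 (S :\ j).
have [pi_gt0 _] := hp i; have [pj_gt0 _] := hp j.
have P_le_ratio : P <= r i / p i.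
  apply: le_trans _ (@hord i j le_ij); rewrite ler_pdivlMr //; nra.
have gain_i : p i * P <= r i by rewrite mulrC -ler_pdivlMr.
have : 0 <= p i * p j * P by rewrite !mulr_ge0 // ltW.
nra.
Qed.

End Exchange.

Theorem claim1 (R : realFieldType) (n : nat) (p r : 'I_n -> R)
  (hp : forall i, 0 < p i /\ p i < 1)
  (hr : forall i, 0 <= r i)
  (hord : forall i j : 'I_n, (i <= j)%N -> r j / p j <= r i / p i) :
  exists2 k : nat, (k <= n)%N &
    forall S : {set 'I_n}, fval p r S <= fval p r (prefix_set n k).
Proof.
pose optimal S := [forall T, fval p r T <= fval p r S].
have optimal_S0 : optimal [arg max_(S > set0) fval p r S]%O.
  by rewrite /optimal; case: arg_maxP => // S _ maxS; apply/forallP => T; exact: maxS.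
case: (arg_maxnP (fun S : {set 'I_n} => #|S|) optimal_S0) => S /forallP optS maxS.
have [|k le_kn defS] := @downward_closed_prefix n S; last first.
  by exists k => //; rewrite -defS.
move=> i j le_ij jS; apply: contraT => iNS.
have optiS : optimal (i |: S).
  apply/forallP => T; apply: le_trans (optS T) _.
  exact: add_earlier_index le_ij (optS _).
by have := maxS _ optiS; rewrite cardsU1 iNS /= add1n ltnn.
Qed.
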